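(* If $\Gamma\vdash^A M:\tau$ and $M\xrightarrow{T}N$, then $\varepsilon\le AT$, i.e. the path $AT$ is positive.
   Context: Calculus $\lambda^{\triangleright}$. Transition variables $\alpha,\beta,\dots$; a transition (stage) $A,B$ is a finite sequence of transition variables ($\varepsilon$ empty, $AB$ concatenation). Types $\tau ::= b \mid \tau\to\tau \mid \triangleright_\alpha\tau \mid \forall\alpha.\tau$; terms $M ::= x \mid M\,M \mid \lambda x{:}\tau.M \mid \blacktriangleright_\alpha M \mid \blacktriangleleft_\alpha M \mid \Lambda\alpha.M \mid M\,A$ (quotation, unquotation, transition abstraction, instantiation). For $A=\alpha_1\cdots\alpha_n$: $\triangleright_A\tau=\triangleright_{\alpha_1}\cdots\triangleright_{\alpha_n}\tau$, $\blacktriangleright_A M=\blacktriangleright_{\alpha_1}\cdots\blacktriangleright_{\alpha_n}M$, $\blacktriangleleft_A M=\blacktriangleleft_{\alpha_n}\cdots\blacktriangleleft_{\alpha_1}M$ (identity for $A=\varepsilon$). Substitutions $M[x:=N]$, and $\tau[\alpha:=B]$, $M[\alpha:=B]$ (replacing $\alpha$ by $B$ in transitions and $\triangleright_\alpha,\blacktriangleright_\alpha,\blacktriangleleft_\alpha$ by $\triangleright_B,\blacktriangleright_B,\blacktriangleleft_B$) are capture-avoiding. A context $\Gamma$ is a finite set $\{x_i:\tau_i@A_i\}$ with distinct $x_i$; FTV denotes free transition variables. Typing $\Gamma\vdash^A M:\tau$: (Var) $x:\tau@A\in\Gamma\Rightarrow\Gamma\vdash^Ax:\tau$; (Abs) $\Gamma,x:\tau@A\vdash^AM:\sigma\Rightarrow\Gamma\vdash^A\lambda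 x{:}\tau.M:\tau\to\sigma$; (App) from $\Gamma\vdash^AM:\tau\to\sigma$, $\Gamma\vdash^AN:\tau$ infer $\Gamma\vdash^AMN:\sigma$; (Quote) $\Gamma\vdash^{A\alpha}M:\tau\Rightarrow\Gamma\vdash^A\blacktriangleright_\alpha M:\triangleright_\alpha\tau$; (Unquote) $\Gamma\vdash^AM:\triangleright_\alpha\tau\Rightarrow\Gamma\vdash^{A\alpha}\blacktriangleleft_\alpha M:\tau$; (Gen) $\Gamma\vdash^AM:\tau$, $\alpha\notin\mathrm{FTV}(\Gamma)\cup\mathrm{FTV}(A)$ $\Rightarrow\Gamma\vdash^A\Lambda\alpha.M:\forall\alpha.\tau$; (Ins) $\Gamma\vdash^AM:\forall\alpha.\tau\Rightarrow\Gamma\vdash^AM\,B:\tau[\alpha:=B]$. Paths $T,U$ are elements of the free group generated by the transition variables (reduced words in $\alpha$ and formal inverses $\alpha^{-1}$); $TU$ is the group product, $\varepsilon$ the unit; transitions are identified with inverse-free paths, called positive. $T\le U$ iff $TA=U$ for some positive $A$; thus $\varepsilon\le T$ iff $T$ is positive. $T[\alpha:=\varepsilon]$ is the group homomorphic image of $T$ sending $\alpha$ to $\varepsilon$ and fixing other generators. Annotated reduction $M\xrightarrow{T}N$ is inductively defined by: $(\lambda x{:}\tau.M)N\xrightarrow{\varepsilon}M[x:=N]$; $(\Lambda\alpha.M)A\xrightarrow{\varepsilon}M[\alpha:=A]$; $\blacktriangleleft_\alpha\blacktriangleright_\alpha M\xrightarrow{\alpha^{-1}}M$; if $M\xrightarrow{T}M'$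 then $\lambda x{:}\tau.M\xrightarrow{T}\lambda x{:}\tau.M'$, $MN\xrightarrow{T}M'N$, $NM\xrightarrow{T}NM'$, $M\,A\xrightarrow{T}M'\,A$, $\blacktriangleright_\alpha M\xrightarrow{\alpha T}\blacktriangleright_\alpha M'$, $\blacktriangleleft_\alpha M\xrightarrow{\alpha^{-1}T}\blacktriangleleft_\alpha M'$, and $\Lambda\alpha.M\xrightarrow{T[\alpha:=\varepsilon]}\Lambda\alpha.M'$. *)

(* Calculus lambda^triangleright, de Bruijn representation
   for both term variables and transition variables. *)
From Stdlib Require Import List Arith Bool.
Import ListNotations.

Definition tvar := nat.
Definition transition := list tvar.

Inductive ty : Type :=
| TBase : nat -> ty
| TArr : ty -> ty -> ty
| TLater : tvar -> ty -> ty
| TAll : ty -> ty.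

Inductive tm : Type :=
| Var : nat -> tm
| App : tm -> tm -> tm
| Lam : ty -> tm -> tm
| Quote : tvar -> tm -> tm
| Unquote : tvar -> tm -> tm
| TLam : tm -> tm
| TApp : tm -> transition -> tm.

Definition shift_tv (c : nat) (a : tvar) : tvar := if a <? c then a else S a.
Definition shift_tr (c : nat) (A : transition) : transition := map (shift_tv c) A.

Fixpoint shift_ty (c : nat) (t : ty) : ty :=
  match t with
  | TBase b => TBase b
  | TArr t1 t2 => TArr (shift_ty c t1) (shift_ty c t2)
  | TLater a t1 => TLater (shift_tv c a) (shift_ty c t1)
  | TAll t1 => TAll (shift_ty (S c) t1)
  end.

Fixpoint shift_tm_tv (c : nat) (M : tm) : tm :=
  match M with
  | Var x => Var x
  | App M1 M2 => App (shift_tm_tv c M1) (shift_tm_tv c M2)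
  | Lam t M1 => Lam (shift_ty c t) (shift_tm_tv c M1)
  | Quote a M1 => Quote (shift_tv c a) (shift_tm_tv c M1)
  | Unquote a M1 => Unquote (shift_tv c a) (shift_tm_tv c M1)
  | TLam M1 => TLam (shift_tm_tv (S c) M1)
  | TApp M1 A => TApp (shift_tm_tv c M1) (shift_tr c A)
  end.

Definition subst_tv (k : nat) (B : transition) (a : tvar) : transition :=
  if a =? k then B else if k <? a then [pred a] else [a].
Definition subst_tr (k : nat) (B : transition) (A : transition) : transition :=
  flat_map (subst_tv k B) A.

Definition laters (B : transition) (t : ty) : ty := fold_right TLater t B.
Definition quotes (B : transition) (M : tm) : tm := fold_right Quote M B.
(* <|_B M = <|_bn ... <|_b1 M *)
Definition unquotes (B : transition) (M : tm) : tm :=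
  fold_left (fun acc b => Unquote b acc) B M.

Fixpoint subst_ty (k : nat) (B : transition) (t : ty) : ty :=
  match t with
  | TBase b => TBase b
  | TArr t1 t2 => TArr (subst_ty k B t1) (subst_ty k B t2)
  | TLater a t1 => laters (subst_tv k B a) (subst_ty k B t1)
  | TAll t1 => TAll (subst_ty (S k) (shift_tr 0 B) t1)
  end.

Fixpoint subst_tm_tv (k : nat) (B : transition) (M : tm) : tm :=
  match M with
  | Var x => Var x
  | App M1 M2 => App (subst_tm_tv k B M1) (subst_tm_tv k B M2)
  | Lam t M1 => Lam (subst_ty k B t) (subst_tm_tv k B M1)
  | Quote a M1 => quotes (subst_tv k B a) (subst_tm_tv k B M1)
  | Unquote a M1 => unquotes (subst_tv k B a) (subst_tm_tv k B M1)
  | TLam M1 => TLam (subst_tm_tv (S k) (shift_tr 0 B) M1)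
  | TApp M1 A => TApp (subst_tm_tv k B M1) (subst_tr k B A)
  end.

Fixpoint shift_tm (c : nat) (M : tm) : tm :=
  match M with
  | Var x => Var (if x <? c then x else S x)
  | App M1 M2 => App (shift_tm c M1) (shift_tm c M2)
  | Lam t M1 => Lam t (shift_tm (S c) M1)
  | Quote a M1 => Quote a (shift_tm c M1)
  | Unquote a M1 => Unquote a (shift_tm c M1)
  | TLam M1 => TLam (shift_tm c M1)
  | TApp M1 A => TApp (shift_tm c M1) A
  end.

Fixpoint subst_tm (k : nat) (N : tm) (M : tm) : tm :=
  match M with
  | Var x => if x =? k then N else if k <? x then Var (pred x) else Var x
  | App M1 M2 => App (subst_tm k N M1) (subst_tm k N M2)
  | Lam t M1 => Lam t (subst_tm (S k) (shift_tm 0 N) M1)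
  | Quote a M1 => Quote a (subst_tm k N M1)
  | Unquote a M1 => Unquote a (subst_tm k N M1)
  | TLam M1 => TLam (subst_tm k (shift_tm_tv 0 N) M1)
  | TApp M1 A => TApp (subst_tm k N M1) A
  end.

(* context: entry i is the type and stage of term variable i *)
Definition ctx := list (ty * transition).
Definition shift_ctx (G : ctx) : ctx :=
  map (fun p => (shift_ty 0 (fst p), shift_tr 0 (snd p))) G.

Inductive has_type : ctx -> transition -> tm -> ty -> Prop :=
| T_Var : forall G A x t, nth_error G x = Some (t, A) -> has_type G A (Var x) t
| T_Abs : forall G A t s M, has_type ((t, A) :: G) A M s ->
    has_type G A (Lam t M) (TArr t s)
| T_App : forall G A t s M N, has_type G A M (TArr t s) -> has_type G A N t ->
    has_type G A (App M N) s
| T_Quote : forall G A a M t, has_type G (A ++ [a]) M t ->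
    has_type G A (Quote a M) (TLater a t)
| T_Unquote : forall G A a M t, has_type G A M (TLater a t) ->
    has_type G (A ++ [a]) (Unquote a M) t
(* alpha fresh for G and A: in de Bruijn form, the binder is the new index 0 *)
| T_Gen : forall G A M t, has_type (shift_ctx G) (shift_tr 0 A) M t ->
    has_type G A (TLam M) (TAll t)
| T_Ins : forall G A M t B, has_type G A M (TAll t) ->
    has_type G A (TApp M B) (subst_ty 0 B t).

(* a letter (a, false) is the generator a, (a, true) is its inverse *)
Definition letter := (tvar * bool)%type.
Definition word := list letter.

Definition letter_eqb (l1 l2 : letter) : bool :=
  (fst l1 =? fst l2) && Bool.eqb (snd l1) (snd l2).
Definition inv_letter (l : letter) : letter := (fst l, negb (snd l)).

Definition push (l : letter) (w : word) : word :=
  match w with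
  | l' :: w' => if letter_eqb l' (inv_letter l) then w' else l :: w
  | [] => [l]
  end.
Definition reduce (w : word) : word := fold_right push [] w.

(* a path is an element of the free group, represented by any word;
   two words denote the same path iff they have the same reduced form *)
Definition path := word.
Definition path_eq (T U : path) : Prop := reduce T = reduce U.
Definition pmul (T U : path) : path := T ++ U.
Definition of_tr (A : transition) : path := map (fun a => (a, false)) A.

Definition ple (T U : path) : Prop := exists A : transition, path_eq (pmul T (of_tr A)) U.

(* T[alpha := eps] for alpha the de Bruijn index 0 bound by the Lambda
   (the remaining variables are lowered since the binder is left) *)
Definition erase0 (T : path) : path :=
  flat_map (fun l => if fst l =? 0 then [] else [(pred (fst l), snd l)]) T.

Inductive step : tm -> path -> tm -> Prop :=
| S_Beta : forall t M N, step (App (Lam t M) N) [] (subst_tm 0 N M)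
| S_TBeta : forall M A, step (TApp (TLam M) A) [] (subst_tm_tv 0 A M)
| S_QU : forall a M, step (Unquote a (Quote a M)) [(a, true)] M
| S_Lam : forall t M T M', step M T M' -> step (Lam t M) T (Lam t M')
| S_AppL : forall M N T M', step M T M' -> step (App M N) T (App M' N)
| S_AppR : forall M N T M', step M T M' -> step (App N M) T (App N M')
| S_TApp : forall M A T M', step M T M' -> step (TApp M A) T (TApp M' A)
| S_Quote : forall a M T M', step M T M' -> step (Quote a M) ((a, false) :: T) (Quote a M')
| S_Unquote : forall a M T M', step M T M' ->
    step (Unquote a M) ((a, true) :: T) (Unquote a M')
| S_TLam : forall M T M', step M T M' -> step (TLam M) (erase0 T) (TLam M').

(** The path [A T] changes only up to equality in the free group: a quotation
    contributes [alpha] to the stage exactly where the step contributes it to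
    the path, an unquotation cancels [alpha alpha^-1], and under [Lambda alpha]
    erasing [alpha] commutes with free reduction while turning the shifted
    stage back into [A].  Since positivity of a path is invariant under
    equality in the free group and trivially holds for a stage, every [A T]
    is positive. *)

From Stdlib Require Import List Arith Bool.
Import ListNotations.

Lemma letter_eqb_refl (l : letter) : letter_eqb l l = true.
Proof.
  destruct l as [a b]; unfold letter_eqb; simpl.
  now rewrite Nat.eqb_refl, eqb_reflx.
Qed.

Lemma letter_eqb_true (l1 l2 : letter) : letter_eqb l1 l2 = true -> l1 = l2.
Proof.
  destruct l1 as [a b], l2 as [c d]; unfold letter_eqb; simpl.
  rewrite andb_true_iff, Nat.eqb_eq. intros [-> H].
  now apply eqb_prop in H as ->.
Qed.

Lemma inv_letter_involutive (l : letter) : inv_letter (inv_letter l) = l.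
Proof. destruct l as [a b]; unfold inv_letter; simpl; now rewrite negb_involutive. Qed.

Fixpoint reduced (w : word) : Prop :=
  match w with
  | [] => True
  | l :: w' =>
      reduced w' /\
      match w' with [] => True | l' :: _ => letter_eqb l' (inv_letter l) = false end
  end.

Lemma push_reduced (l : letter) (w : word) : reduced w -> reduced (push l w).
Proof.
  destruct w as [|l' w']; simpl; [easy|].
  intros [Hw' Hl']. destruct (letter_eqb l' (inv_letter l)) eqn:E; simpl; auto.
Qed.

Lemma fold_push_reduced (x u : word) : reduced x -> reduced (fold_right push x u).
Proof. intros Hx; induction u; simpl; auto using push_reduced. Qed.

Lemma push_cancel (l : letter) (w : word) :
  reduced w -> push l (push (inv_letter l) w) = w.
Proof.
  destruct w as [|l' w']; simpl.
  - now rewrite letter_eqb_refl.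
  - intros [Hw' Hl']. rewrite inv_letter_involutive.
    destruct (letter_eqb l' l) eqn:E.
    + apply letter_eqb_true in E as ->.
      destruct w' as [|l'' w'']; simpl; [easy|]. now rewrite Hl'.
    + simpl. now rewrite letter_eqb_refl.
Qed.

Lemma reduce_app (u v : word) : reduce (u ++ v) = fold_right push (reduce v) u.
Proof. unfold reduce. now rewrite fold_right_app. Qed.

(* The cancelling case needs [x] reduced: otherwise [push] may cancel
   inside [x] instead of restoring it. *)
Lemma fold_push_push (x w : word) (l : letter) : reduced x ->
  fold_right push x (push l w) = push l (fold_right push x w).
Proof.
  intros Hx. destruct w as [|l' w']; [reflexivity|]. simpl.
  destruct (letter_eqb l' (inv_letter l)) eqn:E; [|reflexivity].
  apply letter_eqb_true in E as ->.
  now rewrite push_cancel by now apply fold_push_reduced.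
Qed.

Lemma fold_push_reduce (x u : word) : reduced x ->
  fold_right push x (reduce u) = fold_right push x u.
Proof.
  intros Hx; induction u as [|l u IH]; [reflexivity|].
  change (reduce (l :: u)) with (push l (reduce u)).
  rewrite fold_push_push by exact Hx. simpl. now rewrite IH.
Qed.

Lemma path_eq_app (u u' v v' : path) :
  path_eq u u' -> path_eq v v' -> path_eq (u ++ v) (u' ++ v').
Proof.
  unfold path_eq. intros Hu Hv.
  assert (Hred : reduced (reduce v')) by apply fold_push_reduced, I.
  rewrite !reduce_app, Hv, <- (fold_push_reduce _ u), Hu by exact Hred.
  now apply fold_push_reduce.
Qed.

Lemma path_eq_cancel (l : letter) (w : path) : path_eq (l :: inv_letter l :: w) w.
Proof.
  apply (path_eq_app [l; inv_letter l] [] w w); [|reflexivity].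
  unfold path_eq; simpl. now rewrite letter_eqb_refl.
Qed.

Lemma erase0_app (u v : path) : erase0 (u ++ v) = erase0 u ++ erase0 v.
Proof. unfold erase0. apply flat_map_app. Qed.

Lemma erase0_push (l : letter) (w : path) :
  path_eq (erase0 (push l w)) (erase0 (l :: w)).
Proof.
  destruct w as [|l' w']; [reflexivity|]. unfold push.
  destruct (letter_eqb l' (inv_letter l)) eqn:E; [|reflexivity].
  apply letter_eqb_true in E as ->.
  change (l :: inv_letter l :: w') with ([l; inv_letter l] ++ w').
  rewrite erase0_app. destruct l as [a b].
  unfold erase0 at 2; cbn -[erase0]. destruct (a =? 0); [reflexivity|].
  symmetry. apply (path_eq_cancel (pred a, b)).
Qed.

Lemma erase0_reduce (w : path) : path_eq (erase0 (reduce w)) (erase0 w).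
Proof.
  induction w as [|l w IH]; [reflexivity|].
  change (reduce (l :: w)) with (push l (reduce w)).
  etransitivity; [apply erase0_push|].
  change (l :: reduce w) with ([l] ++ reduce w).
  change (l :: w) with ([l] ++ w).
  rewrite !erase0_app. now apply path_eq_app.
Qed.

Lemma path_eq_erase0 (u v : path) : path_eq u v -> path_eq (erase0 u) (erase0 v).
Proof.
  unfold path_eq. intros Huv.
  rewrite <- (erase0_reduce u), <- (erase0_reduce v). now rewrite Huv.
Qed.

Lemma of_tr_app (A B : transition) : of_tr (A ++ B) = of_tr A ++ of_tr B.
Proof. apply map_app. Qed.

Lemma erase0_of_tr (A : transition) : exists B, erase0 (of_tr A) = of_tr B.
Proof.
  induction A as [|a A [B HB]]; [now exists []|].
  change (a :: A) with ([a] ++ A). rewrite of_tr_app, erase0_app, HB.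
  unfold erase0; cbn. destruct (a =? 0).
  - now exists B.
  - now exists (pred a :: B).
Qed.

Lemma erase0_shift_tr (A : transition) : erase0 (of_tr (shift_tr 0 A)) = of_tr A.
Proof. induction A as [|a A IH]; [reflexivity|]. simpl. now rewrite IH. Qed.

Lemma ple_nil_of_tr (A : transition) : ple [] (of_tr A).
Proof. now exists A. Qed.

Lemma ple_nil_path_eq (u v : path) : ple [] u -> path_eq u v -> ple [] v.
Proof. intros [A HA] Huv. exists A. exact (eq_trans HA Huv). Qed.

Lemma ple_nil_erase0 (w : path) : ple [] w -> ple [] (erase0 w).
Proof.
  intros [A HA]. destruct (erase0_of_tr A) as [B HB].
  exists B. simpl. rewrite <- HB. now apply path_eq_erase0.
Qed.

Lemma step_stage_path_positive (M N : tm) (T : path) : step M T N ->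
  forall G A t, has_type G A M t -> ple [] (of_tr A ++ T).
Proof.
  induction 1; intros G A0 t0 Hty; inversion Hty; subst; eauto.
  - rewrite app_nil_r. apply ple_nil_of_tr.
  - rewrite app_nil_r. apply ple_nil_of_tr.
  - apply (ple_nil_path_eq (of_tr A)); [apply ple_nil_of_tr|].
    rewrite of_tr_app, <- app_assoc, <- (app_nil_r (of_tr A)) at 1.
    apply path_eq_app; [reflexivity|]. symmetry. apply (path_eq_cancel (a, false)).
  - change ((a, false) :: T) with (of_tr [a] ++ T).
    rewrite app_assoc, <- of_tr_app. eauto.
  - apply (ple_nil_path_eq (of_tr A ++ T)); [eauto|].
    rewrite of_tr_app, <- app_assoc.
    apply path_eq_app; [reflexivity|]. symmetry. apply (path_eq_cancel (a, false)).
  - rewrite <- erase0_shift_tr, <- erase0_app. eauto using ple_nil_erase0.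
Qed.

Theorem mainTheorem8 (G : ctx) (A : transition) (M N : tm) (t : ty) (T : path) :
  has_type G A M t -> step M T N -> ple nil (pmul (of_tr A) T).
Proof.
  intros Hty Hstep. exact (step_stage_path_positive M N T Hstep G A t Hty).
Qed.
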